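(* Let $X$ and $Y$ be sequence classes such that $\alpha_{X,Y}$ is a reasonable quasi-norm (on $E\otimes F$ for all Banach spaces $E,F$). If $X$ and $Y$ are linearly stable and finitely injective, then $\alpha_{X,Y}$ is a tensor quasi-norm.
   Context: All Banach spaces are over $\mathbb{K}=\mathbb{R}$ or $\mathbb{C}$. A sequence class is a rule $X$ assigning to each Banach space $E$ a Banach space $X(E)$ which is a vector subspace of $E^{\mathbb{N}}$ (coordinatewise operations) with $c_{00}(E)\subseteq X(E)$, $\|(x_j)\|_\infty\le\|(x_j)\|_{X(E)}$, and $\|x\cdot e_j\|_{X(E)}=\|x\|_E$ ($x$ in the $j$-th coordinate, zeros elsewhere). $(x_j)_{j=1}^n$ denotes $(x_1,\dots,x_n,0,0,\dots)$. $X$ is linearly stable if for all Banach spaces $E,F$ and every bounded linear $T\colon E\to F$, $(T x_j)\in X(F)$ whenever $(x_j)\in X(E)$ and the induced map $X(E)\to X(F)$ has norm $\|T\|$. $X$ is finitely injective if $\|(x_j)_{j=1}^k\|_{X(E)}\le\|(i(x_j))_{j=1}^k\|_{X(F)}$ whenever $i\colon E\to F$ is a linear isometric embedding, $k\in\mathbb{N}$, $x_1,\dots,x_k\in E$. For $u\in E\otimes F$, $\alpha_{X,Y}(u)=\inf\{\|(x_j)_{j=1}^n\|_{X(E)}\|(y_j)_{j=1}^n\|_{Y(F)}:u=\sum_{j=1}^nx_j\otimes y_j\}$. A quasi-norm $\alpha$ on $E\otimes F$ is reasonable if $\varepsilon\le\alpha$ ($\varepsilon$ the injective tensor norm) and $\alpha(x\otimes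 y)\le\|x\|\|y\|$. A reasonable quasi-norm $\alpha$ (defined on all $E\otimes F$) is a tensor quasi-norm if it is uniform: $\|T_1\otimes T_2\colon E_1\otimes_\alpha E_2\to F_1\otimes_\alpha F_2\|\le\|T_1\|\|T_2\|$ for all bounded linear $T_i\colon E_i\to F_i$; and finitely generated: $\alpha(u;E\otimes F)=\inf\{\alpha(u;M\otimes N):u\in M\otimes N,\ M,N$ finite-dimensional subspaces of $E,F\}$. *)

(* Banach spaces over K = R or C are
   [completeNormedModType K] with K := scalar_field R b (b = true: K = R,
   b = false: K = R[i] = complex numbers over R). *)
From HB Require Import structures.
From mathcomp Require Import all_boot all_order all_algebra.
From mathcomp Require Import all_classical all_reals all_analysis.
From mathcomp.real_closed Require Import complex.

Set Implicit Arguments.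
Unset Strict Implicit.
Unset Printing Implicit Defensive.

Import Order.TTheory GRing.Theory Num.Theory.
Local Open Scope ring_scope.

Definition scalar_field (R : realType) (b : bool) : numFieldType :=
  if b then (R : numFieldType) else (complex R : numFieldType).

Section Defs.
Variable K : numFieldType.

Notation Banach := (completeNormedModType K).

Definition seq_unit (E : Banach) (x : E) (j : nat) : nat -> E :=
  fun i => if i == j then x else 0.

(* (x_j)_{j=1}^k = (x_1, ..., x_k, 0, 0, ...) (indices shifted to start at 0) *)
Definition seq_trunc (E : Banach) (k : nat) (x : nat -> E) : nat -> E :=
  fun i => if (i < k)%N then x i else 0.

Definition bounded_by (E F : Banach) (T : E -> F) (c : K) : Prop :=
  0 <= c /\ forall x, `|T x| <= c * `|x|.

Record seq_class := SeqClass {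
  sc_mem : forall E : Banach, (nat -> E) -> Prop;
  sc_norm : forall E : Banach, (nat -> E) -> K;
  sc_mem0 : forall E : Banach, sc_mem (fun _ => (0 : E));
  sc_memD : forall (E : Banach) (x y : nat -> E),
      sc_mem x -> sc_mem y -> sc_mem (fun j => x j + y j);
  sc_memZ : forall (E : Banach) (a : K) (x : nat -> E),
      sc_mem x -> sc_mem (fun j => a *: x j);
  sc_normD : forall (E : Banach) (x y : nat -> E),
      sc_mem x -> sc_mem y -> sc_norm (fun j => x j + y j) <= sc_norm x + sc_norm y;
  sc_normZ : forall (E : Banach) (a : K) (x : nat -> E),
      sc_mem x -> sc_norm (fun j => a *: x j) = `|a| * sc_norm x;
  sc_norm_eq0 : forall (E : Banach) (x : nat -> E),
      sc_mem x -> sc_norm x = 0 -> x = (fun _ => 0);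
  sc_complete : forall (E : Banach) (s : nat -> nat -> E),
      (forall n, sc_mem (s n)) ->
      (forall e : K, 0 < e -> exists N, forall m n, (N <= m)%N -> (N <= n)%N ->
           sc_norm (fun j => s m j - s n j) < e) ->
      exists l, sc_mem l /\
        (forall e : K, 0 < e -> exists N, forall n, (N <= n)%N ->
           sc_norm (fun j => s n j - l j) < e);
  sc_c00 : forall (E : Banach) (x : nat -> E),
      (exists n, forall j, (n <= j)%N -> x j = 0) -> sc_mem x;
  sc_sup_le : forall (E : Banach) (x : nat -> E),
      sc_mem x -> forall j, `|x j| <= sc_norm x;
  sc_norm_unit : forall (E : Banach) (x : E) (j : nat),
      sc_norm (seq_unit x j) = `|x|
}.

(* Linear stability: for every bounded linear T : E -> F, (T x_j) in X(F)
   whenever (x_j) in X(E), and the induced map has norm <= ||T||, i.e.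
   ||(T x_j)||_X(F) <= c ||(x_j)||_X(E) for every bound c of T.
   (The reverse inequality ||induced|| >= ||T|| is automatic from
   sc_norm_unit.) *)
Definition linearly_stable (X : seq_class) : Prop :=
  forall (E F : Banach) (T : {linear E -> F}) (c : K), bounded_by T c ->
  forall x : nat -> E, sc_mem X x ->
    sc_mem X (fun j => T (x j)) /\
    sc_norm X (fun j => T (x j)) <= c * sc_norm X x.

Definition isometric_embedding (E F : Banach) (i : {linear E -> F}) : Prop :=
  forall x, `|i x| = `|x|.

Definition finitely_injective (X : seq_class) : Prop :=
  forall (E F : Banach) (i : {linear E -> F}), isometric_embedding i ->
  forall (k : nat) (x : nat -> E),
    sc_norm X (seq_trunc k x) <= sc_norm X (seq_trunc k (fun j => i (x j))).

(* An element u = sum_j x_j (x) y_j of E (x) F is given by a representation,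
   i.e. a finite list of pairs (x_j, y_j). *)
Definition rep (E F : Banach) := seq (E * F).

Definition bilinear_form (E F : Banach) (B : E -> F -> K) : Prop :=
  (forall (a : K) (x x' : E) (y : F), B (a *: x + x') y = a * B x y + B x' y) /\
  (forall (a : K) (x : E) (y y' : F), B x (a *: y + y') = a * B x y + B x y').

(* Two representations define the same tensor iff every bilinear form on
   E x F takes the same value on them (universal property of E (x) F). *)
Definition teq (E F : Banach) (s t : rep E F) : Prop :=
  forall B : E -> F -> K, bilinear_form B ->
    \sum_(p <- s) B p.1 p.2 = \sum_(p <- t) B p.1 p.2.

Definition rep_xs (E F : Banach) (s : rep E F) : nat -> E :=
  fun j => nth 0 (map fst s) j.
Definition rep_ys (E F : Banach) (s : rep E F) : nat -> F :=
  fun j => nth 0 (map snd s) j.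

Definition rep_scale (E F : Banach) (a : K) (s : rep E F) : rep E F :=
  map (fun p => (a *: p.1, p.2)) s.

Definition rep_map (E1 E2 F1 F2 : Banach) (T1 : E1 -> F1) (T2 : E2 -> F2)
  (s : rep E1 E2) : rep F1 F2 := map (fun p => (T1 p.1, T2 p.2)) s.

Section Alpha.
Variables X Y : seq_class.

Definition rep_cost (E F : Banach) (t : rep E F) : K :=
  sc_norm X (rep_xs t) * sc_norm Y (rep_ys t).

(* alpha_le s c  <->  alpha_{X,Y}(u) <= c, where u is the tensor represented
   by s; i.e. inf { ||(x_j)||_X ||(y_j)||_Y : u = sum x_j (x) y_j } <= c. *)
Definition alpha_le (E F : Banach) (s : rep E F) (c : K) : Prop :=
  forall e : K, 0 < e -> exists t : rep E F, teq s t /\ rep_cost t < c + e.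

Definition alpha_quasinorm (E F : Banach) : Prop :=
  exists C : K, 1 <= C /\
  [/\ alpha_le ([::] : rep E F) 0,
      (forall s : rep E F, alpha_le s 0 -> teq s [::]),
      (forall (a : K) (s : rep E F) (c : K),
          alpha_le s c -> alpha_le (rep_scale a s) (`|a| * c)) &
      (forall (s1 s2 : rep E F) (c1 c2 : K),
          alpha_le s1 c1 -> alpha_le s2 c2 -> alpha_le (s1 ++ s2) (C * (c1 + c2)))].

(* reasonable: eps <= alpha and alpha(x (x) y) <= ||x|| ||y||.
   eps(u) = sup { |sum_j phi(x_j) psi(y_j)| : phi in B_{E'}, psi in B_{F'} };
   eps(u) <= alpha(u) iff for all such phi, psi and every representation t
   of u, |sum phi(x_j) psi(y_j)| <= ||(x_j)||_X ||(y_j)||_Y. *)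
Definition alpha_reasonable (E F : Banach) : Prop :=
  (forall (phi : {linear E -> K^o}) (psi : {linear F -> K^o}),
      (forall x, `|phi x| <= `|x|) -> (forall y, `|psi y| <= `|y|) ->
      forall t : rep E F,
        `|\sum_(p <- t) ((phi p.1 : K) * (psi p.2 : K))| <= rep_cost t) /\
  (forall (x : E) (y : F), alpha_le [:: (x, y)] (`|x| * `|y|)).

Definition alpha_reasonable_quasinorm : Prop :=
  forall E F : Banach, alpha_quasinorm E F /\ alpha_reasonable E F.

Definition alpha_uniform : Prop :=
  forall (E1 E2 F1 F2 : Banach) (T1 : {linear E1 -> F1}) (T2 : {linear E2 -> F2})
         (c1 c2 : K),
    bounded_by T1 c1 -> bounded_by T2 c2 ->
    forall (s : rep E1 E2) (c : K),
      alpha_le s c -> alpha_le (rep_map T1 T2 s) (c1 * c2 * c).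

Definition finite_dimensional (M : Banach) : Prop :=
  exists b : seq M, forall m : M, exists a : nat -> K,
    m = \sum_(i < size b) a i *: b`_i.

(* finitely generated: alpha(u; E (x) F) = inf { alpha(u; M (x) N) : u in M (x) N,
   M, N finite-dimensional subspaces of E, F }.  A finite-dimensional subspace
   M of E (with the induced norm) is given as a finite-dimensional Banach space
   M with an isometric linear embedding i : M -> E; "u in M (x) N" means u is the
   image under i (x) j of some u' in M (x) N. *)
Definition alpha_finitely_generated : Prop :=
  forall (E F : Banach) (s : rep E F),
    (forall (M N : Banach) (i : {linear M -> E}) (j : {linear N -> F})
            (s' : rep M N) (c : K),
       finite_dimensional M -> finite_dimensional N ->
       isometric_embedding i -> isometric_embedding j ->
       teq (rep_map i j s') s -> alpha_le s' c -> alpha_le s c) /\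
    (forall c : K, alpha_le s c -> forall e : K, 0 < e ->
       exists (M N : Banach) (i : {linear M -> E}) (j : {linear N -> F})
              (s' : rep M N),
         [/\ finite_dimensional M /\ finite_dimensional N,
             isometric_embedding i /\ isometric_embedding j,
             teq (rep_map i j s') s & alpha_le s' (c + e)]).

Definition alpha_tensor_quasinorm : Prop :=
  [/\ alpha_reasonable_quasinorm, alpha_uniform & alpha_finitely_generated].

End Alpha.
End Defs.

(* Uniformity follows from linear stability: mapping a representation of u by
   T1 (x) T2 maps the sequences (x_j), (y_j) to (T1 x_j), (T2 y_j), so its cost
   grows by at most ||T1|| ||T2||.  For finite generation, one inequality is
   uniformity applied to the isometric inclusions of M and N.  For the other, a
   near-optimal representation u = sum_j x_j (x) y_j already lives in
   span{x_j} (x) span{y_j}, and finite injectivity says that its cost there is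
   no larger than in E (x) F.  These spans are Banach spaces because a finite
   dimensional subspace of a normed space over a complete field (R or C) is
   closed: if v has positive distance to span vs, the coefficient of v in good
   approximations a v + y of a point of the closure of span (v :: vs) is a
   Cauchy filter, whose limit splits off. *)

From HB Require Import structures.
From mathcomp Require Import all_boot all_order all_algebra.
From mathcomp Require Import all_classical all_reals all_analysis.
From mathcomp.real_closed Require Import complex.

Set Implicit Arguments.
Unset Strict Implicit.
Unset Printing Implicit Defensive.
Import Order.TTheory GRing.Theory Num.Theory.
Import numFieldNormedType.Exports.
Local Open Scope classical_set_scope.
Local Open Scope ring_scope.

Section Representations.
Variable K : numFieldType.
Notation Banach := (completeNormedModType K).

Lemma teq_sym (E F : Banach) (s t : rep E F) : teq s t -> teq t s.
Proof. by move=> st B hB; rewrite (st B hB). Qed.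

Lemma teq_trans (E F : Banach) (s t u : rep E F) : teq s t -> teq t u -> teq s u.
Proof. by move=> st tu B hB; rewrite (st B hB) (tu B hB). Qed.

Lemma teq_map (E1 E2 F1 F2 : Banach) (T1 : {linear E1 -> F1})
    (T2 : {linear E2 -> F2}) (s t : rep E1 E2) :
  teq s t -> teq (rep_map T1 T2 s) (rep_map T1 T2 t).
Proof.
move=> st B [B1 B2]; rewrite /rep_map !big_map /=.
apply: (st (fun x y => B (T1 x) (T2 y))); split=> a *; rewrite linearP.
  exact: B1.
exact: B2.
Qed.

Lemma nth0_map (A B : zmodType) (f : A -> B) (l : seq A) j :
  f 0 = 0 -> nth 0 (map f l) j = f (nth 0 l j).
Proof.
move=> f0; have [jl|lj] := ltnP j (size l); first by rewrite (nth_map 0).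
by rewrite !nth_default ?size_map.
Qed.

Lemma rep_xs_map (E1 E2 F1 F2 : Banach) (T1 : {linear E1 -> F1})
    (T2 : {linear E2 -> F2}) (s : rep E1 E2) :
  rep_xs (rep_map T1 T2 s) = (fun j => T1 (rep_xs s j)).
Proof.
by apply: funext => j; rewrite /rep_xs /rep_map -map_comp !nth0_map //= linear0.
Qed.

Lemma rep_ys_map (E1 E2 F1 F2 : Banach) (T1 : {linear E1 -> F1})
    (T2 : {linear E2 -> F2}) (s : rep E1 E2) :
  rep_ys (rep_map T1 T2 s) = (fun j => T2 (rep_ys s j)).
Proof.
by apply: funext => j; rewrite /rep_ys /rep_map -map_comp !nth0_map //= linear0.
Qed.

Lemma rep_xs_eq0 (E F : Banach) (s : rep E F) j :
  (size s <= j)%N -> rep_xs s j = 0.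
Proof. by move=> sj; rewrite /rep_xs nth_default ?size_map. Qed.

Lemma rep_ys_eq0 (E F : Banach) (s : rep E F) j :
  (size s <= j)%N -> rep_ys s j = 0.
Proof. by move=> sj; rewrite /rep_ys nth_default ?size_map. Qed.

Lemma seq_trunc_rep_xs (E F : Banach) (s : rep E F) k :
  (size s <= k)%N -> seq_trunc k (rep_xs s) = rep_xs s.
Proof.
move=> sk; apply: funext => j; rewrite /seq_trunc.
by case: ltnP => // kj; rewrite rep_xs_eq0 // (leq_trans sk).
Qed.

Lemma seq_trunc_rep_ys (E F : Banach) (s : rep E F) k :
  (size s <= k)%N -> seq_trunc k (rep_ys s) = rep_ys s.
Proof.
move=> sk; apply: funext => j; rewrite /seq_trunc.
by case: ltnP => // kj; rewrite rep_ys_eq0 // (leq_trans sk).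
Qed.

Lemma sc_norm_ge0 (X : seq_class K) (E : Banach) (x : nat -> E) :
  sc_mem X x -> 0 <= sc_norm X x.
Proof. by move=> Xx; apply: le_trans (sc_sup_le Xx 0). Qed.

Lemma rep_xs_mem (X : seq_class K) (E F : Banach) (s : rep E F) :
  sc_mem X (rep_xs s).
Proof. by apply: sc_c00; exists (size s); apply: rep_xs_eq0. Qed.

Lemma rep_ys_mem (X : seq_class K) (E F : Banach) (s : rep E F) :
  sc_mem X (rep_ys s).
Proof. by apply: sc_c00; exists (size s); apply: rep_ys_eq0. Qed.

Lemma isometric_embedding_bounded (E F : Banach) (i : {linear E -> F}) :
  isometric_embedding i -> bounded_by i 1.
Proof. by move=> iso_i; split=> // x; rewrite iso_i mul1r. Qed.

Section Cost.
Variables X Y : seq_class K.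

Lemma alpha_le_teq (E F : Banach) (s s' : rep E F) c :
  teq s s' -> alpha_le X Y s c -> alpha_le X Y s' c.
Proof.
move=> ss' sc e e0; have [t [st ct]] := sc e e0.
by exists t; split=> //; apply: teq_trans (teq_sym ss') st.
Qed.

Lemma rep_cost_alpha_le (E F : Banach) (s : rep E F) c :
  rep_cost X Y s <= c -> alpha_le X Y s c.
Proof. by move=> sc e e0; exists s; split=> //; rewrite ltr_pwDr. Qed.

Lemma alpha_le_rep_map (E1 E2 F1 F2 : Banach) (T1 : {linear E1 -> F1})
    (T2 : {linear E2 -> F2}) (k : K) : 0 <= k ->
    (forall t, rep_cost X Y (rep_map T1 T2 t) <= k * rep_cost X Y t) ->
  forall s c, alpha_le X Y s c -> alpha_le X Y (rep_map T1 T2 s) (k * c).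
Proof.
move=> k0 Tk s c sc e e0; have k1 : 0 < k + 1 by rewrite ltr_wpDl.
have [t [st ct]] := sc (e / (k + 1)) (divr_gt0 e0 k1).
exists (rep_map T1 T2 t); split; first exact: teq_map.
apply: (le_lt_trans (Tk t)); apply: (le_lt_trans (y := k * (c + e / (k + 1)))).
  by rewrite ler_wpM2l // ltW.
by rewrite mulrDr ltrD2l mulrA ltr_pdivrMr // mulrDr mulr1 mulrC ltrDl.
Qed.

Lemma linearly_stable_rep_cost (E1 E2 F1 F2 : Banach) (T1 : {linear E1 -> F1})
    (T2 : {linear E2 -> F2}) (c1 c2 : K) :
  linearly_stable X -> linearly_stable Y ->
  bounded_by T1 c1 -> bounded_by T2 c2 -> forall t : rep E1 E2,
  rep_cost X Y (rep_map T1 T2 t) <= c1 * c2 * rep_cost X Y t.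
Proof.
move=> LX LY T1c1 T2c2 t; rewrite /rep_cost rep_xs_map rep_ys_map.
have [XT1 XT1t] := LX _ _ T1 c1 T1c1 _ (rep_xs_mem X t).
have [YT2 YT2t] := LY _ _ T2 c2 T2c2 _ (rep_ys_mem Y t).
by rewrite mulrACA ler_pM ?sc_norm_ge0.
Qed.

Lemma linearly_stable_alpha_uniform :
  linearly_stable X -> linearly_stable Y -> alpha_uniform X Y.
Proof.
move=> LX LY E1 E2 F1 F2 T1 T2 c1 c2 T1c1 T2c2.
apply: alpha_le_rep_map; first by rewrite mulr_ge0 ?T1c1.1 ?T2c2.1.
exact: linearly_stable_rep_cost.
Qed.

Lemma finitely_injective_rep_cost (M N E F : Banach) (i : {linear M -> E})
    (j : {linear N -> F}) :
  finitely_injective X -> finitely_injective Y ->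
  isometric_embedding i -> isometric_embedding j -> forall s : rep M N,
  rep_cost X Y s <= rep_cost X Y (rep_map i j s).
Proof.
move=> IX IY iso_i iso_j s.
have sz : size (rep_map i j s) = size s by rewrite size_map.
have [Xs Ys] := (rep_xs_mem X s, rep_ys_mem Y s).
rewrite /rep_cost ler_pM ?sc_norm_ge0 //.
  have := IX _ _ i iso_i (size s) (rep_xs s).
  by rewrite -(rep_xs_map i j) !seq_trunc_rep_xs ?sz.
have := IY _ _ j iso_j (size s) (rep_ys s).
by rewrite -(rep_ys_map i j) !seq_trunc_rep_ys ?sz.
Qed.

End Cost.
End Representations.

Definition complete_scalars (K : numFieldType) : Prop :=
  forall G : set_system K, ProperFilter G -> cauchy G -> exists l : K, G --> l.

Section ComplexComplete.
Variable R : realType.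
Local Notation C := (complex R).
Local Open Scope complex_scope.

Lemma normc_ge_Re (z : C) : (`|complex.Re z|)%:C <= `|z|.
Proof.
rewrite normc_def lecR -sqrtr_sqr; apply: ler_wsqrtr.
by rewrite lerDl sqr_ge0.
Qed.

Lemma normc_ge_Im (z : C) : (`|complex.Im z|)%:C <= `|z|.
Proof.
rewrite normc_def lecR -sqrtr_sqr; apply: ler_wsqrtr.
by rewrite lerDr sqr_ge0.
Qed.

Lemma normc_le_Re_Im (z : C) : `|z| <= (`|complex.Re z| + `|complex.Im z|)%:C.
Proof.
rewrite normc_def lecR -[leRHS]ger0_norm ?addr_ge0 // -sqrtr_sqr.
apply: ler_wsqrtr; rewrite sqrrD !real_normK ?num_real // -addrA lerD2l lerDr.
by rewrite mulrn_wge0 // mulr_ge0.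
Qed.

Lemma ReB (z w : C) : complex.Re (z - w) = complex.Re z - complex.Re w.
Proof. by case: z; case: w. Qed.

Lemma ImB (z w : C) : complex.Im (z - w) = complex.Im z - complex.Im w.
Proof. by case: z; case: w. Qed.

(* Filters on C are taken on [scalar_field R false], the numFieldType view of
   C, which is what carries its uniform structure. *)
Lemma cauchy_fmap_lipschitz (G : set_system (scalar_field R false))
    (p : C -> R) :
  (forall z w : C, (`|p z - p w|)%:C <= `|z - w|) -> ProperFilter G ->
  cauchy G -> cauchy (p @ G).
Proof.
move=> p_lip GF /cauchyP Gc; apply/cauchyP => e e0.
have [z Gz] : exists z, G (ball z e%:C) by apply: Gc; rewrite ltcR.
exists (p z); change (G (p @^-1` ball (p z) e)).
apply: (filterS _ Gz) => w; rewrite /ball /= -ltcR.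
exact: le_lt_trans.
Qed.

Lemma complex_complete : complete_scalars (scalar_field R false).
Proof.
move=> G GF Gc.
have Re_lip (z w : C) : (`|complex.Re z - complex.Re w|)%:C <= `|z - w|.
  by rewrite -ReB normc_ge_Re.
have Im_lip (z w : C) : (`|complex.Im z - complex.Im w|)%:C <= `|z - w|.
  by rewrite -ImB normc_ge_Im.
have [r /cvgrPdist_lt Gr] :=
  (cvg_ex _).1 (R_complete _ (cauchy_fmap_lipschitz Re_lip GF Gc)).
have [i /cvgrPdist_lt Gi] :=
  (cvg_ex _).1 (R_complete _ (cauchy_fmap_lipschitz Im_lip GF Gc)).
exists (r +i* i); apply/cvgrPdist_lt => e e0.
have eR : e = (complex.Re e)%:C.
  by rewrite [LHS]complexE ger0_Im ?ltW // mulr0 addr0.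
have Re_e_gt0 : 0 < complex.Re e by rewrite -ltcR -eR.
near=> w; apply: le_lt_trans (normc_le_Re_Im _) _.
rewrite [X in _ < X]eR ltcR ReB ImB /= [X in _ < X]splitr ltrD //; near: w.
  by apply: Gr; rewrite divr_gt0.
by apply: Gi; rewrite divr_gt0.
Unshelve. all: by end_near.
Qed.

End ComplexComplete.

Lemma scalar_field_complete (R : realType) (b : bool) :
  complete_scalars (scalar_field R b).
Proof.
case: b; last exact: complex_complete.
by move=> G GF Gc; apply/cvg_ex; apply: R_complete.
Qed.

Section FiniteSpan.
Variable K : numFieldType.
Variable E : normedModType K.

Definition finspan (vs : seq E) : set E :=
  [set x | exists a : nat -> K, x = \sum_(i < size vs) a i *: vs`_i].

Definition adherent (A : set E) (x : E) : Prop :=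
  forall e : K, 0 < e -> exists2 w, A w & `|x - w| < e.

Lemma finspan0 vs : finspan vs 0.
Proof. by exists (fun=> 0); rewrite big1 // => i _; rewrite scale0r. Qed.

Lemma finspanD vs x y : finspan vs x -> finspan vs y -> finspan vs (x + y).
Proof.
move=> [a ->] [b ->]; exists (fun i => a i + b i).
by rewrite -big_split; apply: eq_bigr => i _; rewrite scalerDl.
Qed.

Lemma finspanZ vs c x : finspan vs x -> finspan vs (c *: x).
Proof.
move=> [a ->]; exists (fun i => c * a i).
by rewrite scaler_sumr; apply: eq_bigr => i _; rewrite scalerA.
Qed.

Lemma finspan_nth vs k : finspan vs vs`_k.
Proof.
have [kvs|vsk] := ltnP k (size vs); last first.
  by rewrite nth_default //; apply: finspan0.
exists (fun i => (i == k)%:R).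
rewrite (bigD1 (Ordinal kvs)) //= eqxx scale1r big1 ?addr0 // => i ik.
by rewrite -val_eqE /= in ik; rewrite (negbTE ik) scale0r.
Qed.

Lemma finspan_nil x : finspan [::] x -> x = 0.
Proof. by move=> [a ->]; rewrite big_ord0. Qed.

Lemma finspan_cons v vs x :
  finspan (v :: vs) x <-> exists a y, finspan vs y /\ x = a *: v + y.
Proof.
split=> [[a ->]|[a [y [[b ->] ->]]]].
  exists (a 0%N), (\sum_(i < size vs) a i.+1 *: vs`_i); split.
    by exists (fun i => a i.+1).
  by rewrite /= big_ord_recl.
exists (fun i => if i is j.+1 then b j else a).
by rewrite /= big_ord_recl.
Qed.

Lemma finspan_consW v vs x :
  finspan vs v -> finspan (v :: vs) x -> finspan vs x.
Proof.
by move=> vv /finspan_cons[a [y [vy ->]]]; apply: finspanD (finspanZ a vv) vy.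
Qed.

Lemma pos_min (e1 e2 : K) : 0 < e1 -> 0 < e2 ->
  exists2 e, 0 < e & e <= e1 /\ e <= e2.
Proof.
move=> e1_gt0 e2_gt0.
by have /orP[e12|e21] := real_leVge (gtr0_real e1_gt0) (gtr0_real e2_gt0);
  [exists e1 | exists e2].
Qed.

Lemma adherent_dist_gt0 (A : set E) v :
  (forall x, adherent A x -> A x) -> ~ A v ->
  exists2 d : K, 0 < d & forall z, A z -> d <= `|v - z|.
Proof.
move=> A_closed Av; apply: contrapT => no_d; apply/Av/A_closed => e e0.
apply: contrapT => no_w; apply: no_d; exists e => // z Az.
rewrite (real_leNgt (gtr0_real e0) (normr_real _)).
by apply/negP => ve; apply: no_w; exists z.
Qed.

Lemma finspan_dist_scale vs v d :
    (forall z, finspan vs z -> d <= `|v - z|) ->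
  forall a y, finspan vs y -> `|a| * d <= `|a *: v + y|.
Proof.
move=> vd a y vy; have [->|a0] := eqVneq a 0; first by rewrite normr0 mul0r.
have -> : a *: v + y = a *: (v - (- a^-1 *: y)).
  by rewrite scaleNr opprK scalerDr scalerA mulfV // scale1r.
by rewrite normrZ ler_wpM2l // vd //; apply: finspanZ.
Qed.

Section CoefFilter.
Variables (vs : seq E) (v x : E).

Definition coef_filter : set_system K :=
  fun P => exists2 e : K, 0 < e &
    forall a y, finspan vs y -> `|x - (a *: v + y)| < e -> P a.

Lemma coef_filter_filter : Filter coef_filter.
Proof.
split; first by exists 1.
  move=> P Q [e1 e1_gt0 e1P] [e2 e2_gt0 e2Q].
  have [e e_gt0 [ee1 ee2]] := pos_min e1_gt0 e2_gt0.
  exists e => // a y vy xe; split.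
    by apply: e1P vy _; apply: lt_le_trans ee1.
  by apply: e2Q vy _; apply: lt_le_trans ee2.
by move=> P Q PQ [e e_gt0 eP]; exists e => // a y vy xe; apply/PQ/(eP a y vy).
Qed.

Lemma coef_filter_proper :
  adherent (finspan (v :: vs)) x -> ProperFilter coef_filter.
Proof.
move=> xa; split=> [[e e_gt0 e0]|]; last exact: coef_filter_filter.
have [w /finspan_cons[a [y [vy ->]]] xw] := xa e e_gt0.
exact: e0 xw.
Qed.

Lemma coef_filter_cauchy d : 0 < d ->
  (forall z, finspan vs z -> d <= `|v - z|) -> cauchy coef_filter.
Proof.
move=> d_gt0 vd; apply/(cauchy_ballP _ (FF := coef_filter_filter)).
move=> e e_gt0.
pose A a := exists2 y, finspan vs y & `|x - (a *: v + y)| < e * d / 2.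
have FA : coef_filter A.
  by exists (e * d / 2); rewrite ?divr_gt0 ?mulr_gt0 // => a y vy; exists y.
exists (A, A) => //= -[a b] [[y vy xa] [y' vy' xb]] /=.
rewrite /ball /= -(ltr_pM2r d_gt0).
have vyy' := finspanD vy (finspanZ (-1) vy').
apply: le_lt_trans (finspan_dist_scale vd (a - b) vyy') _.
have -> : (a - b) *: v + (y + (-1) *: y') =
    (x - (b *: v + y')) - (x - (a *: v + y)).
  rewrite [RHS](_ : _ = (a *: v + y) - (b *: v + y')).
    by rewrite scaleN1r scalerBl opprD addrACA.
  by rewrite opprB addrC addrA subrK.
by apply: le_lt_trans (ler_normB _ _) _; rewrite [X in _ < X]splitr ltrD.
Qed.

Lemma coef_filter_limit (a0 : K) :
    adherent (finspan (v :: vs)) x -> coef_filter --> a0 ->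
  adherent (finspan vs) (x - a0 *: v).
Proof.
move=> xa a0_lim eps eps_gt0.
(* [eps'] makes the error [(a - a0) *: v] of a good coefficient [a] < eps/2. *)
pose eps' := eps / 2 / (`|v| + 1).
have v1_gt0 : 0 < `|v| + 1 by rewrite ltr_wpDl.
have eps'_gt0 : 0 < eps' by rewrite !divr_gt0.
have [e1 e1_gt0 e1a0] := a0_lim _ (nbhsx_ballx a0 eps' eps'_gt0).
have [e e_gt0 [ee1 ee2]] := pos_min e1_gt0 (divr_gt0 eps_gt0 (ltr0Sn K 1)).
have [w /finspan_cons[a [y [vy ->]]] xw] := xa e e_gt0.
have a0a : `|a0 - a| < eps' := e1a0 a y vy (lt_le_trans xw ee1).
exists y => //.
have -> : x - a0 *: v - y = (x - (a *: v + y)) + (a - a0) *: v.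
  by rewrite scalerBl opprD !addrA (addrAC (x - a *: v)) subrK addrAC.
apply: le_lt_trans (ler_normD _ _) _.
rewrite [X in _ < X]splitr ltr_leD //; first exact: lt_le_trans xw ee2.
rewrite normrZ distrC; apply: le_trans (ler_wpM2r (normr_ge0 v) (ltW a0a)) _.
rewrite -[X in _ <= X](divfK (lt0r_neq0 v1_gt0)) -/eps'.
by apply: ler_wpM2l; [exact: ltW | rewrite lerDl].
Qed.

End CoefFilter.

Lemma finspan_closed (Kc : complete_scalars K) vs x :
  adherent (finspan vs) x -> finspan vs x.
Proof.
elim: vs x => [|v vs IH] x xa.
  suff -> : x = 0 by apply: finspan0.
  apply/eqP/contraT; rewrite -normr_gt0 => x_gt0.
  by have [w /finspan_nil ->] := xa _ x_gt0; rewrite subr0 ltxx.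
have [vv|vv] := pselect (finspan vs v).
  apply/finspan_cons; exists 0, x; rewrite scale0r add0r; split=> //.
  apply: IH => e e_gt0.
  by have [w /(finspan_consW vv) vw xw] := xa e e_gt0; exists w.
have [d d_gt0 vd] := adherent_dist_gt0 IH vv.
have [a0 a0_lim] :=
  Kc _ (coef_filter_proper xa) (coef_filter_cauchy x d_gt0 vd).
apply/finspan_cons; exists a0, (x - a0 *: v); split; last by rewrite addrC subrK.
exact/IH/coef_filter_limit.
Qed.

End FiniteSpan.

Section FiniteSpanSubspace.
Variable K : numFieldType.
Hypothesis Kc : complete_scalars K.
Variable E : completeNormedModType K.
Variable vs : seq E.

Definition finspan_pred : pred E := fun x => `[< finspan vs x >].

Lemma finspan_predP x : reflect (finspan vs x) (x \in finspan_pred).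
Proof. exact: asboolP. Qed.

Lemma finspan_pred_submod_closed : GRing.subsemimod_closed finspan_pred.
Proof.
split; first split.
- exact/finspan_predP/finspan0.
- move=> x y /finspan_predP vx /finspan_predP vy.
  exact/finspan_predP/finspanD.
- by move=> a x /finspan_predP vx; apply/finspan_predP/finspanZ.
Qed.

HB.instance Definition _ :=
  GRing.isSubmodClosed.Build K E finspan_pred finspan_pred_submod_closed.

Record subspace :=
  Subspace { subspace_val : E; _ : subspace_val \in finspan_pred }.
HB.instance Definition _ := [isSub for subspace_val].
HB.instance Definition _ := [Choice of subspace by <:].
HB.instance Definition _ := [SubChoice_isSubLmodule of subspace by <:].

Definition subspace_norm (m : subspace) : K := `|subspace_val m|.

Lemma subspace_normD x y :
  subspace_norm (x + y) <= subspace_norm x + subspace_norm y.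
Proof. exact: ler_normD. Qed.

Lemma subspace_normZ (a : K) x : subspace_norm (a *: x) = `|a| * subspace_norm x.
Proof. exact: normrZ. Qed.

Lemma subspace_norm_eq0 x : subspace_norm x = 0 -> x = 0.
Proof. by move/normr0_eq0 => x0; apply: val_inj. Qed.

HB.instance Definition _ := Lmodule_isNormed.Build K subspace
  subspace_normD subspace_normZ subspace_norm_eq0.

Lemma subspace_complete (F : set_system subspace) :
  ProperFilter F -> cauchy F -> cvg F.
Proof.
move=> FF Fc; pose G := subspace_val @ F.
have GF : ProperFilter G by apply: fmap_proper_filter.
have Gc : cauchy G.
  apply/(cauchyP G) => e e_gt0; have [m Fm] := (cauchyP F).1 Fc e e_gt0.
  exists (subspace_val m).
  change (F (subspace_val @^-1` ball (subspace_val m) e)).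
  by apply: filterS Fm => m'; rewrite /= -!ball_normE.
have [x Gx] := (cvg_ex _).1 (cauchy_cvg _ Gc).
have vx : finspan vs x.
  apply: (finspan_closed Kc) => e e_gt0.
  have [m Fm] := @filter_ex _ F FF _ (Gx _ (nbhsx_ballx x e e_gt0)).
  exists (subspace_val m); first exact/finspan_predP/valP.
  by move: Fm; rewrite -ball_normE.
apply: (cvgP (Subspace (introT (finspan_predP x) vx))).
move=> P /nbhs_ballP[e e_gt0 eP].
have Fx : F (subspace_val @^-1` ball x e) := Gx _ (nbhsx_ballx x e e_gt0).
apply: filterS Fx => m xm; apply: eP.
by move: xm; rewrite -!ball_normE.
Qed.

HB.instance Definition _ := Uniform_isComplete.Build subspace subspace_complete.

Lemma subspace_val_linear : linear subspace_val.
Proof. by []. Qed.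

HB.instance Definition _ :=
  GRing.isLinear.Build K subspace E *:%R subspace_val subspace_val_linear.

Lemma exists_finite_dimensional_subspace :
  exists (M : completeNormedModType K) (i : {linear M -> E}) (f : nat -> M),
    [/\ finite_dimensional M, isometric_embedding i & forall k, i (f k) = vs`_k].
Proof.
pose f k := Subspace (introT (finspan_predP _) (finspan_nth vs k)).
exists subspace, subspace_val, f; split=> //.
exists (mkseq f (size vs)) => m; have /finspan_predP[a ma] := valP m.
exists a; apply: val_inj.
by rewrite /= ma linear_sum size_mkseq; apply: eq_bigr => i _; rewrite nth_mkseq.
Qed.

End FiniteSpanSubspace.

Lemma exists_finite_dimensional_lift (K : numFieldType) :
    complete_scalars K ->
  forall (E F : completeNormedModType K) (t : rep E F),
  exists (M N : completeNormedModType K) (i : {linear M -> E})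
         (j : {linear N -> F}) (s : rep M N),
    [/\ finite_dimensional M /\ finite_dimensional N,
        isometric_embedding i /\ isometric_embedding j & rep_map i j s = t].
Proof.
move=> Kc E F t.
have [M [i [f [fdM iso_i i_f]]]] :=
  exists_finite_dimensional_subspace Kc (map fst t).
have [N [j [g [fdN iso_j j_g]]]] :=
  exists_finite_dimensional_subspace Kc (map snd t).
exists M, N, i, j, (mkseq (fun k => (f k, g k)) (size t)); split=> //.
apply: (@eq_from_nth _ 0); rewrite !size_map ?size_iota // => k kt.
rewrite (nth_map 0) ?size_mkseq // nth_mkseq //= i_f j_g !(nth_map 0) //.
by case: (nth _ t k).
Qed.

Lemma finitely_injective_alpha_finitely_generated (K : numFieldType)
    (X Y : seq_class K) : complete_scalars K ->
  linearly_stable X -> linearly_stable Y ->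
  finitely_injective X -> finitely_injective Y -> alpha_finitely_generated X Y.
Proof.
move=> Kc LX LY IX IY E F s; split.
  move=> M N i j s' c _ _ iso_i iso_j s's s'c; apply: alpha_le_teq s's _.
  have := linearly_stable_alpha_uniform LX LY (isometric_embedding_bounded iso_i)
    (isometric_embedding_bounded iso_j) s'c.
  by rewrite !mul1r.
move=> c sc e e_gt0; have [t [st tc]] := sc e e_gt0.
have [M [N [i [j [s' [fdMN [iso_i iso_j] ts']]]]]] :=
  exists_finite_dimensional_lift Kc t.
exists M, N, i, j, s'; split=> //; first by rewrite ts'; apply: teq_sym.
apply/rep_cost_alpha_le/(le_trans _ (ltW tc)); rewrite -ts'.
exact: finitely_injective_rep_cost.
Qed.

Theorem proposition2p5 (R : realType) (b : bool)
  (X Y : seq_class (scalar_field R b)) :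
  alpha_reasonable_quasinorm X Y ->
  linearly_stable X -> linearly_stable Y ->
  finitely_injective X -> finitely_injective Y ->
  alpha_tensor_quasinorm X Y.
Proof.
move=> reasonable LX LY IX IY; split=> //.
  exact: linearly_stable_alpha_uniform.
exact: finitely_injective_alpha_finitely_generated
  (@scalar_field_complete R b) LX LY IX IY.
Qed.
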